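(* Let $\Theta$ be a finite set, let $P_1,\dots,P_m$ be experiments, and let $(A,u)$ be a decision problem admitting a weak decomposition $(A_1,u_1),\dots,(A_k,u_k)$. Then $$V(P_1,\dots,P_m;(A,u))\ge\sum_{\ell=1}^kV(P_1,\dots,P_m;(A_\ell,u_\ell)).$$
   Context: $\Theta$ is a finite set of states. A decision problem is a pair $(A,u)$ with $A$ a finite nonempty action set and $u:\Theta\times A\to\mathbb{R}$; for $\alpha\in\Delta(A)$ write $u(\theta,\alpha)=\sum_a\alpha(a)u(\theta,a)$. An experiment is a map $P:\Theta\to\Delta(Y)$ with $Y$ a finite signal set. Given experiments $P_j:\Theta\to\Delta(Y_j)$, $j=1,\dots,m$, let $\mathbf Y=Y_1\times\cdots\times Y_m$ and let $\mathcal P(P_1,\dots,P_m)$ be the set of experiments $P:\Theta\to\Delta(\mathbf Y)$ whose $j$-th marginal is $P_j(\cdot|\theta)$ for every $\theta$ and $j$. A strategy is a map $\sigma:\mathbf Y\to\Delta(A)$. Define $V(P_1,\dots,P_m;(A,u))=\max_{\sigma}\min_{P\in\mathcal P(P_1,\dots,P_m)}\sum_{\theta}\sum_{\mathbf y}P(\mathbf y|\theta)u(\theta,\sigma(\mathbf y))$. The composition $\bigoplus_{\ell=1}^k(A_\ell,u_\ell)$ is the decision problem with action set $A_1\times\cdots\times A_k$ and utility $u(\theta,(a_1,\dots,a_k))=\sum_\ell u_\ell(\theta,a_\ell)$. For a decision problem let $\mathcal H(A,u)=\mathrm{co}\{u(\cdot,a):a\in A\}-\mathbb{R}_+^{\Theta}$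 (Minkowski difference). A decision problem $(A,u)$ admits a weak decomposition $\{(A_\ell,u_\ell)\}_{\ell=1}^k$ if $\mathcal H(\bigoplus_{\ell=1}^k(A_\ell,u_\ell))\subseteq\mathcal H(A,u)$. *)

From mathcomp Require Import all_boot all_order all_algebra.
From mathcomp Require Import all_classical all_reals.
Set Implicit Arguments. Unset Strict Implicit. Unset Printing Implicit Defensive.
Import Order.TTheory GRing.Theory Num.Theory.
Local Open Scope classical_set_scope.
Local Open Scope ring_scope.

Definition is_dist (R : numDomainType) (T : finType) (p : T -> R) : Prop :=
  (forall t, 0 <= p t) /\ \sum_(t : T) p t = 1.

Definition experiment (R : numDomainType) (Th Y : finType) (P : Th -> Y -> R) : Prop :=
  forall th, is_dist (P th).

Definition sigprod (m : nat) (Y : 'I_m -> finType) := {dffun forall j : 'I_m, Y j}.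

Definition couplings (R : numDomainType) (Th : finType) (m : nat) (Y : 'I_m -> finType)
  (Ps : forall j : 'I_m, Th -> Y j -> R) : set (Th -> sigprod Y -> R) :=
  [set P | experiment P /\
     forall (th : Th) (j : 'I_m) (y : Y j),
       \sum_(ys : sigprod Y | ys j == y) P th ys = Ps j th y].

Definition strategies (R : numDomainType) (m : nat) (Y : 'I_m -> finType) (A : finType)
  : set (sigprod Y -> A -> R) :=
  [set s | forall ys, is_dist (s ys)].

Definition mixed_u (R : numDomainType) (Th A : finType) (u : Th -> A -> R)
  (th : Th) (al : A -> R) : R := \sum_(a : A) al a * u th a.

Definition payoff (R : numDomainType) (Th : finType) (m : nat) (Y : 'I_m -> finType)
  (A : finType) (u : Th -> A -> R) (s : sigprod Y -> A -> R) (P : Th -> sigprod Y -> R) : R :=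
  \sum_(th : Th) \sum_(ys : sigprod Y) P th ys * mixed_u u th (s ys).

(* V(P_1,...,P_m; (A,u)) = max_sigma min_{P in P(P_1..P_m)} payoff;
   written with sup/inf (the max and min are attained). *)
Definition V (R : realType) (Th : finType) (m : nat) (Y : 'I_m -> finType)
  (Ps : forall j : 'I_m, Th -> Y j -> R) (A : finType) (u : Th -> A -> R) : R :=
  sup [set inf [set payoff u s P | P in couplings Ps] | s in @strategies R m Y A].

Definition comp_actions (k : nat) (Al : 'I_k -> finType) := {dffun forall l : 'I_k, Al l}.

Definition comp_u (R : numDomainType) (Th : finType) (k : nat) (Al : 'I_k -> finType)
  (ul : forall l : 'I_k, Th -> Al l -> R) : Th -> comp_actions Al -> R :=
  fun th a => \sum_(l < k) ul l th (a l).

(* H(A,u) = co{u(.,a) : a in A} - R_+^Theta *)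
Definition Hset (R : numDomainType) (Th A : finType) (u : Th -> A -> R) : set (Th -> R) :=
  [set x | exists al : A -> R, is_dist al /\ forall th, x th <= mixed_u u th al].

Definition weak_decomposition (R : numDomainType) (Th A : finType) (u : Th -> A -> R)
  (k : nat) (Al : 'I_k -> finType) (ul : forall l : 'I_k, Th -> Al l -> R) : Prop :=
  Hset (comp_u ul) `<=` Hset u.

(* Given strategies
   s_1,...,s_k for the components, play them independently: at signal y the
   product mixed action of the s_l(y) on A_1 x ... x A_k is, by definition of the
   composed utility, an element of H(bigoplus (A_l,u_l)) with coordinates
   sum_l u_l(th, s_l(y)).  The weak decomposition supplies a mixed action tau(y)
   on A dominating it in every state.  Because payoffs are linear in the
   utility, every joint experiment P gives sum_l payoff_l(s_l,P) <= payoff(tau,P),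
   and taking infima over P bounds sum_l inf_P payoff_l(s_l,P) by V(...;(A,u)).
   A general fact about sums of suprema (sum_sup_le) then closes the argument. *)
From mathcomp Require Import all_boot all_order all_algebra.
From mathcomp Require Import all_classical all_reals.
Import Order.TTheory GRing.Theory Num.Theory.
Local Open Scope ring_scope.
Set Implicit Arguments. Unset Strict Implicit. Unset Printing Implicit Defensive.

Definition prodf (R : comNzRingType) (k : nat) (T : 'I_k -> finType)
  (f : forall i, T i -> R) : {dffun forall i, T i} -> R :=
  fun a => \prod_i f i (a i).

Lemma sum_prodf (R : comNzRingType) (k : nat) (T : 'I_k -> finType)
  (f : forall i, T i -> R) :
  \sum_a prodf f a = \prod_i \sum_(b : T i) f i b.
Proof.
under [RHS]eq_bigr => i _ do rewrite (big_tag (fun i => f i) i).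
rewrite bigA_distr_big_dep.
rewrite (reindex (@dffun_of_fprod _ T)); last exact/onW_bij/dffun_of_fprod_bij.
transitivity (\sum_(t : fprod T) \prod_(i in 'I_k) [ffun b => f i b] (t i)).
  by apply: eq_bigr => t _; apply: eq_bigr => i _; rewrite !ffunE.
rewrite (@big_fprod _ 0 1 *%R +%R _ T (fun i => [ffun b => f i b])).
apply: eq_big => // g _; apply: eq_bigr => i _.
by case: (g i) => j x /=; rewrite /untag; case: eqP => // e; rewrite ffunE.
Qed.

Lemma marginal_prodf (R : comNzRingType) (k : nat) (T : 'I_k -> finType)
  (f : forall i, T i -> R) (l : 'I_k) (b : T l) :
  \sum_(a : {dffun forall i, T i} | a l == b) prodf f a =
  f l b * \prod_(i | i != l) \sum_(b' : T i) f i b'.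
Proof.
pose g i (b' : T i) :=
  if (i != l) || (Tagged T b' == Tagged T b) then f i b' else 0.
have sum_g_l : \sum_b0 g l b0 = f l b.
  rewrite (bigD1 b) //= /g eqxx /= eqxx big1 ?addr0 // => b' Hb'.
  by rewrite eq_Tagged /= (negbTE Hb').
have sum_g_other : \prod_(i | i != l) \sum_b0 g i b0 =
                   \prod_(i | i != l) \sum_b' f i b'.
  by apply: eq_bigr => i Hi; apply: eq_bigr => b' _; rewrite /g Hi.
have := sum_prodf g.
rewrite [in X in _ = X -> _](bigD1 l) //= sum_g_l sum_g_other => <-.
rewrite big_mkcond /=; apply: eq_bigr => a _; rewrite /prodf.
case: eqP => [Hab|Hab].
  apply: eq_bigr => i _; rewrite /g; case: (i =P l) => //= ?; subst i.
  by rewrite eq_Tagged /= Hab eqxx.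
rewrite (bigD1 l) //= /g eqxx /= eq_Tagged /=.
by case: eqP => // ?; rewrite mul0r.
Qed.

Section ProductDistributions.
Variables (R : numDomainType) (k : nat) (T : 'I_k -> finType).
Variable f : forall i, T i -> R.
Arguments f : clear implicits.
Hypothesis f_dist : forall i, is_dist (f i).

Lemma is_dist_prodf : is_dist (prodf f).
Proof.
split; first by move=> a; apply: prodr_ge0 => i _; exact: (f_dist i).1.
by rewrite sum_prodf; apply: big1 => i _; exact: (f_dist i).2.
Qed.

Lemma marginal_prodf_dist (l : 'I_k) (b : T l) :
  \sum_(a : {dffun forall i, T i} | a l == b) prodf f a = f l b.
Proof. by rewrite marginal_prodf big1 ?mulr1 // => i _; exact: (f_dist i).2. Qed.

End ProductDistributions.

Lemma mixed_u_comp (R : numDomainType) (Th : finType) (k : nat)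
  (Al : 'I_k -> finType) (ul : forall l, Th -> Al l -> R)
  (al : forall l, Al l -> R) (al_dist : forall l, is_dist (al l)) (th : Th) :
  mixed_u (comp_u ul) th (prodf al) = \sum_l mixed_u (ul l) th (al l).
Proof.
rewrite /mixed_u /comp_u.
under eq_bigr do rewrite mulr_sumr.
rewrite exchange_big; apply: eq_bigr => l _.
rewrite (partition_big (fun a : comp_actions Al => a l) predT) //=.
apply: eq_bigr => b _.
transitivity (\sum_(a : comp_actions Al | a l == b) prodf al a * ul l th b).
  by apply: eq_big => // a /eqP ->.
by rewrite -mulr_suml marginal_prodf_dist.
Qed.

Lemma dist_le1 (R : numDomainType) (T : finType) (p : T -> R) (t : T) :
  is_dist p -> p t <= 1.
Proof. by move=> [p0 p1]; rewrite -p1 (bigD1 t) //= lerDl; exact: sumr_ge0. Qed.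

Definition payoff_bound (R : numDomainType) (Th A : finType) (u : Th -> A -> R) : R :=
  \sum_th \sum_a `|u th a|.

Lemma norm_mixed_u_le (R : numDomainType) (Th A : finType) (u : Th -> A -> R)
  (th : Th) (al : A -> R) :
  is_dist al -> `|mixed_u u th al| <= \sum_a `|u th a|.
Proof.
move=> al_dist; apply: le_trans (ler_norm_sum _ _ _) _.
apply: ler_sum => a _; rewrite normrM ger0_norm; last exact: al_dist.1.
by apply: ler_piMl => //; exact: dist_le1.
Qed.

Lemma norm_payoff_le (R : numDomainType) (Th : finType) (m : nat)
  (Y : 'I_m -> finType) (A : finType) (u : Th -> A -> R) s P :
  @strategies R m Y A s -> experiment P -> `|payoff u s P| <= payoff_bound u.
Proof.
move=> s_strat P_exp; apply: le_trans (ler_norm_sum _ _ _) _.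
apply: ler_sum => th _; apply: le_trans (ler_norm_sum _ _ _) _.
apply: (@le_trans _ _ (\sum_ys P th ys * \sum_a `|u th a|)).
  apply: ler_sum => ys _; rewrite normrM ger0_norm; last exact: (P_exp th).1.
  by apply: ler_wpM2l; [exact: (P_exp th).1 | exact: norm_mixed_u_le].
by rewrite -mulr_suml (P_exp th).2 mul1r.
Qed.

Lemma payoff_le (R : numDomainType) (Th : finType) (m : nat) (Y : 'I_m -> finType)
  (A B : finType) (u : Th -> A -> R) (v : Th -> B -> R)
  (s : sigprod Y -> A -> R) (t : sigprod Y -> B -> R) (P : Th -> sigprod Y -> R) :
  experiment P -> (forall ys th, mixed_u u th (s ys) <= mixed_u v th (t ys)) ->
  payoff u s P <= payoff v t P.
Proof.
move=> P_exp le_st; apply: ler_sum => th _; apply: ler_sum => ys _.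
by apply: ler_wpM2l; [exact: (P_exp th).1 | exact: le_st].
Qed.

Lemma payoff_comp (R : numDomainType) (Th : finType) (m : nat) (Y : 'I_m -> finType)
  (k : nat) (Al : 'I_k -> finType) (ul : forall l, Th -> Al l -> R)
  (s : forall l, sigprod Y -> Al l -> R)
  (s_strat : forall l, @strategies R m Y (Al l) (s l)) (P : Th -> sigprod Y -> R) :
  payoff (comp_u ul) (fun ys => prodf (fun l => s l ys)) P =
  \sum_l payoff (ul l) (s l) P.
Proof.
rewrite /payoff.
under eq_bigr => th _ do (under eq_bigr => ys _ do
  rewrite (mixed_u_comp ul (fun l => s_strat l ys)) mulr_sumr; rewrite exchange_big).
by rewrite exchange_big.
Qed.

(* The signals drawn independently form a joint experiment with the given
   marginals; in particular the set of couplings is never empty. *)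
Lemma independent_coupling (R : numDomainType) (Th : finType) (m : nat)
  (Y : 'I_m -> finType) (Ps : forall j, Th -> Y j -> R)
  (Ps_exp : forall j, experiment (Ps j)) :
  couplings Ps (fun th => prodf (fun j => Ps j th)).
Proof.
split=> [th|th j y]; first exact: is_dist_prodf (fun j => Ps_exp j th).
exact: marginal_prodf_dist (fun j => Ps_exp j th) _ _.
Qed.

Lemma sum_sup_le (R : realType) (k : nat) (S : 'I_k -> set R) (b : R) :
  (forall l, has_sup (S l)) ->
  (forall x : 'I_k -> R, (forall l, S l (x l)) -> \sum_l x l <= b) ->
  \sum_l sup (S l) <= b.
Proof.
move=> S_sup sum_le; apply/ler_addgt0Pr => e e0.
pose c := e / k.+1%:R.
have c0 : 0 < c by rewrite divr_gt0 // ltr0n.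
have near_sup l : exists x, S l x /\ sup (S l) - c < x.
  by have [x Sx lt_x] := sup_adherent c0 (S_sup l); exists x.
have [x x_near] := choice near_sup.
apply: (@le_trans _ _ (\sum_l (x l + c))).
  by apply: ler_sum => l _; rewrite -lerBlDr; apply/ltW; exact: (x_near l).2.
rewrite big_split /= sumr_const card_ord; apply: lerD.
  by apply: sum_le => l; exact: (x_near l).1.
rewrite -mulr_natr -[e](@divfK _ k.+1%:R) ?pnatr_eq0 //.
by apply: ler_wpM2l; [apply/ltW | rewrite ler_nat].
Qed.

Section RobustValue.
Local Open Scope classical_set_scope.
Variables (R : realType) (Th : finType) (m : nat) (Y : 'I_m -> finType).
Variable Ps : forall j, Th -> Y j -> R.
Arguments Ps : clear implicits.
Hypothesis Ps_exp : forall j, experiment (Ps j).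

Definition outcomes (A : finType) (u : Th -> A -> R) (s : sigprod Y -> A -> R)
  : set R := [set payoff u s P | P in couplings Ps].

Definition guarantees (A : finType) (u : Th -> A -> R) : set R :=
  [set inf (outcomes u s) | s in @strategies R m Y A].

Lemma outcomes_neq0 (A : finType) (u : Th -> A -> R) s : outcomes u s !=set0.
Proof.
pose P_indep th := prodf (fun j => Ps j th).
by exists (payoff u s P_indep), P_indep => //; exact: independent_coupling.
Qed.

Lemma outcomes_lbound (A : finType) (u : Th -> A -> R) s :
  @strategies R m Y A s -> lbound (outcomes u s) (- payoff_bound u).
Proof.
move=> s_strat x [P [P_exp _] <-]; rewrite lerNl.
by apply: le_trans (norm_payoff_le u s_strat P_exp); rewrite -normrN ler_norm.
Qed.

Lemma inf_outcomes_le (A : finType) (u : Th -> A -> R) s P :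
  @strategies R m Y A s -> couplings Ps P -> inf (outcomes u s) <= payoff u s P.
Proof.
move=> s_strat P_coupl; apply: ge_inf; last by exists P.
by exists (- payoff_bound u); exact: outcomes_lbound.
Qed.

(* Guarantees are bounded above; they form a nonempty set as soon as there is
   an action, so V is a genuine supremum bounding every guarantee. *)
Lemma guarantees_ubound (A : finType) (u : Th -> A -> R) :
  ubound (guarantees u) (payoff_bound u).
Proof.
move=> _ [s s_strat <-]; have [_ [P P_coupl _]] := outcomes_neq0 u s.
apply: le_trans (inf_outcomes_le u s_strat P_coupl) _.
exact: le_trans (ler_norm _) (norm_payoff_le u s_strat P_coupl.1).
Qed.

Lemma guarantee_le_V (A : finType) (u : Th -> A -> R) s :
  @strategies R m Y A s -> inf (outcomes u s) <= V Ps u.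
Proof.
move=> s_strat; apply: ub_le_sup; last by exists s.
by exists (payoff_bound u); exact: guarantees_ubound.
Qed.

Lemma guarantees_has_sup (A : finType) (u : Th -> A -> R) :
  (0 < #|A|)%N -> has_sup (guarantees u).
Proof.
case/card_gt0P => a0 _; split; last by exists (payoff_bound u); exact: guarantees_ubound.
pose pure (ys : sigprod Y) (a : A) : R := (a == a0)%:R.
have pure_strat : @strategies R m Y A pure.
  move=> ys; split=> [a|]; first exact: ler0n.
  by rewrite /pure (bigD1 a0) //= eqxx big1 ?addr0 // => a /negbTE ->.
by exists (inf (outcomes u pure)), pure.
Qed.

Lemma decomposed_strategy (A : finType) (u : Th -> A -> R) (k : nat)
  (Al : 'I_k -> finType) (ul : forall l, Th -> Al l -> R)
  (dec : weak_decomposition u ul) (s : forall l, sigprod Y -> Al l -> R)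
  (s_strat : forall l, @strategies R m Y (Al l) (s l)) :
  exists2 tau, @strategies R m Y A tau &
    forall P, couplings Ps P -> \sum_l payoff (ul l) (s l) P <= payoff u tau P.
Proof.
have dominate ys : exists al : A -> R, is_dist al /\
    forall th, mixed_u (comp_u ul) th (prodf (fun l => s l ys)) <= mixed_u u th al.
  apply: dec; exists (prodf (fun l => s l ys)); split=> //.
  exact: is_dist_prodf (fun l => s_strat l ys).
have [tau tau_dom] := choice dominate.
exists tau => [ys|P [P_exp _]]; first exact: (tau_dom ys).1.
rewrite -payoff_comp //; apply: payoff_le => // ys th; exact: (tau_dom ys).2.
Qed.

Lemma sum_guarantees_le_V (A : finType) (u : Th -> A -> R) (k : nat)
  (Al : 'I_k -> finType) (ul : forall l, Th -> Al l -> R)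
  (dec : weak_decomposition u ul) (s : forall l, sigprod Y -> Al l -> R)
  (s_strat : forall l, @strategies R m Y (Al l) (s l)) :
  \sum_l inf (outcomes (ul l) (s l)) <= V Ps u.
Proof.
have [tau tau_strat tau_good] := decomposed_strategy dec s_strat.
apply: le_trans (guarantee_le_V u tau_strat).
apply: lb_le_inf; first exact: outcomes_neq0.
move=> _ [P P_coupl <-]; apply: le_trans (tau_good P P_coupl).
by apply: ler_sum => l _; exact: inf_outcomes_le.
Qed.

End RobustValue.

Theorem lemma7 (R : realType) (Th : finType) (m : nat) (Y : 'I_m -> finType)
  (Ps : forall j : 'I_m, Th -> Y j -> R) (HPs : forall j : 'I_m, experiment (Ps j))
  (A : finType) (hA : (0 < #|A|)%N) (u : Th -> A -> R)
  (k : nat) (Al : 'I_k -> finType) (hAl : forall l : 'I_k, (0 < #|Al l|)%N)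
  (ul : forall l : 'I_k, Th -> Al l -> R)
  (Hdec : weak_decomposition u ul) :
  \sum_(l < k) V Ps (ul l) <= V Ps u.
Proof.
apply: sum_sup_le => [l|x x_guar]; first exact: guarantees_has_sup.
have witness l : {s | @strategies R m Y (Al l) s /\ inf (outcomes Ps (ul l) s) = x l}.
  by apply: cid; have [s s_strat <-] := x_guar l; exists s.
have -> : x = fun l => inf (outcomes Ps (ul l) (sval (witness l))).
  by apply: funext => l; rewrite (proj2 (svalP (witness l))).
exact: sum_guarantees_le_V (fun l => proj1 (svalP (witness l))).
Qed.
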